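(* Let $m\geq 1$, $n\geq 3$, and let $i,j\in V$. There exists a walk of length $2n-1$ from $i$ to $j$ in $D^m_n$ if and only if there exists a walk of length $n-1$ from $i$ to $j$ in $D^m_n$. In such cases, there are exactly $m$ distinct walks of length $2n-1$ from $i$ to $j$ in $D^m_n$.
   Context: For integers $m\geq 1$, $n\geq 3$, the oriented Dutch windmill graph $D^m_n$ is the directed graph with vertex set $V=\{1,2,\ldots,m(n-1)+1\}$ whose directed edges $(a,b)$ are exactly: $(1,(k-1)(n-1)+2)$ for $k\in\{1,\ldots,m\}$; $((k-1)(n-1)+i,(k-1)(n-1)+i+1)$ for $k\in\{1,\ldots,m\}$ and $i\in\{2,\ldots,n-1\}$; and $((k-1)(n-1)+n,1)$ for $k\in\{1,\ldots,m\}$. A walk is a sequence of vertices $\langle v_1,\ldots,v_r\rangle$ in which each $(v_t,v_{t+1})$ is an edge; its length is $r-1$; walks are distinct when they are distinct sequences. *)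

From mathcomp Require Import all_boot.
Set Implicit Arguments. Unset Strict Implicit. Unset Printing Implicit Defensive.

Definition nverts (m n : nat) : nat := m * (n - 1) + 1.

Definition in_V (m n v : nat) : bool := (1 <= v) && (v <= nverts m n).

Definition dw_edge (m n : nat) (a b : nat) : bool :=
  [|| has (fun k => (a == 1) && (b == (k - 1) * (n - 1) + 2)) (iota 1 m),
      has (fun k => has (fun i => (a == (k - 1) * (n - 1) + i) &&
                                 (b == (k - 1) * (n - 1) + i + 1))
                         (iota 2 (n - 2))) (iota 1 m)
    | has (fun k => (a == (k - 1) * (n - 1) + n) && (b == 1)) (iota 1 m)].

Definition is_walk (m n : nat) (L i j : nat) (w : seq nat) : bool :=
  [&& size w == L.+1, all (in_V m n) w, head 0 w == i, last 0 w == j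
    & path (dw_edge m n) (head 0 w) (behead w)].

Definition vert (m n : nat) : finType := 'I_(nverts m n).
Definition vlab (m n : nat) (x : vert m n) : nat := (nat_of_ord x).+1.

Definition walks (m n L i j : nat) : {set (L.+1).-tuple (vert m n)} :=
  [set t : (L.+1).-tuple (vert m n) | is_walk m n L i j (map (@vlab m n) t)].

(** Every vertex other than the centre 1 has exactly one out-neighbour, so a
    walk leaving the petal vertex at position t of a cycle is forced back to 1
    after n-1-t steps, while a closed walk of length n from 1 is one of the m
    cycles.  Hence, writing n-1 = s + t with s the forced distance from i to 1,
    the walks of length 2n-1 from i to j are the forced path to 1, a choice of
    one of the m cycles, and a walk of length t from 1 to j, and the walks of
    length n-1 from i to j are the forced path followed by the same kind of
    walk of length t.  A walk of length t <= n-1 from 1 is determined by the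
    cycle it enters, and different cycles give different endpoints, so there is
    at most one such walk. *)

From mathcomp Require Import all_boot zify.
Set Implicit Arguments. Unset Strict Implicit.

(* The paper's vertex (k-1)(n-1)+i with k and i shifted to start at 0:
   cycle k < m, position t = i-2 <= n-2. *)
Definition petal (n k t : nat) : nat := k * (n - 1) + t + 2.

Definition next (n v : nat) : nat :=
  if (v - 2) %% (n - 1) == n - 2 then 1 else v + 1.

Definition out_nbrs (m n v : nat) : seq nat :=
  if v == 1 then [seq petal n k 0 | k <- iota 0 m] else [:: next n v].

(* [walk_tails m n L v] lists the walks of length L from v with v dropped. *)
Fixpoint walk_tails (m n L v : nat) : seq (seq nat) :=
  if L is L'.+1 then [seq s :: w | s <- out_nbrs m n v, w <- walk_tails m n L' s]
  else [:: [::]].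

Definition nwalks (m n L v j : nat) : nat :=
  count (fun w => last v w == j) (walk_tails m n L v).

Lemma hasP_iota (P : pred nat) a b :
  reflect (exists2 k, a <= k < a + b & P k) (has P (iota a b)).
Proof.
by apply: (iffP hasP) => -[k hk Pk]; exists k => //; move: hk; rewrite mem_iota.
Qed.

Lemma count_uniq_le1 (T : eqType) (P : pred T) (s : seq T) :
  uniq s -> (forall x y, P x -> P y -> x = y) -> count P s <= 1.
Proof.
move=> s_uniq P_inj; have [/hasP[x _ Px] | ] := boolP (has P s).
  rewrite (@eq_in_count _ _ (pred1 x)) ?count_uniq_mem ?leq_b1 // => y _ /=.
  by apply/idP/eqP => [Py | ->] //; exact: P_inj Py Px.
by rewrite has_count lt0n negbK => /eqP->.
Qed.

Lemma sumn_map_const (T : Type) (c : nat) (s : seq T) :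
  sumn [seq c | _ <- s] = size s * c.
Proof. by elim: s => //= x s ->; rewrite mulSn. Qed.

Lemma petal_neq1 n k t : (petal n k t == 1) = false.
Proof. by rewrite /petal addn2. Qed.

Lemma petalS n k t : petal n k t + 1 = petal n k t.+1.
Proof. by rewrite /petal addn1 -addSn -addnS. Qed.

Section Windmill.

Variables m n : nat.
Hypothesis n_ge3 : 3 <= n.

Lemma petal_pos_inj t t' k k' : t <= n - 2 -> t' <= n - 2 ->
  k * (n - 1) + t = k' * (n - 1) + t' -> t = t'.
Proof.
move=> ht ht' /(congr1 (modn^~ (n - 1))).
by rewrite !modnMDl !modn_small //; lia.
Qed.

Lemma petal_cycle_inj t k k' : petal n k t = petal n k' t -> k = k'.
Proof. by move/eqP; rewrite /petal !eqn_add2r eqn_pmul2r; [move/eqP | lia]. Qed.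

Lemma in_V_petal k t : k < m -> t <= n - 2 -> in_V m n (petal n k t).
Proof.
move=> hk ht; rewrite /in_V /petal /nverts.
have : k.+1 * (n - 1) <= m * (n - 1) by rewrite leq_mul2r hk orbT.
rewrite mulSn; set p := k * _; set q := m * _; lia.
Qed.

Lemma petalP v : in_V m n v -> v != 1 ->
  exists k t, [/\ k < m, t <= n - 2 & v = petal n k t].
Proof.
move=> /andP[v_ge1 v_le] v_neq1; have hd : 0 < n - 1 by lia.
have E := divn_eq (v - 2) (n - 1); have ht := ltn_pmod (v - 2) hd.
exists ((v - 2) %/ (n - 1)), ((v - 2) %% (n - 1)); split.
- by rewrite ltn_divLR //; rewrite /nverts in v_le; lia.
- lia.
- by move: E; rewrite /petal; set q := _ %/ _; set r := _ %% _; set p := q * _; lia.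
Qed.

Lemma next_petal k t : t <= n - 2 ->
  next n (petal n k t) = if t == n - 2 then 1 else petal n k t.+1.
Proof.
move=> ht; rewrite -petalS /next /petal.
have -> : k * (n - 1) + t + 2 - 2 = k * (n - 1) + t by rewrite addnK.
by rewrite modnMDl modn_small //; lia.
Qed.

Lemma dw_edge_center b : dw_edge m n 1 b = (b \in out_nbrs m n 1).
Proof.
rewrite /dw_edge /out_nbrs eqxx; apply/idP/idP.
- case/or3P.
  + case/hasP_iota => k hk /andP[_ /eqP ->].
    apply/mapP; exists (k - 1); first by rewrite mem_iota; lia.
    by rewrite /petal addn0.
  + case/hasP_iota => k _ /hasP_iota[i hi /andP[/eqP E _]].
    by move: E; set p := _ * _; lia.
  + case/hasP_iota => k _ /andP[/eqP E _].
    by move: E; set p := _ * _; lia.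
- case/mapP => k; rewrite mem_iota => hk ->; apply/orP; left; apply/hasP_iota.
  by exists k.+1; [lia | rewrite /petal subSS subn0 /= addn0].
Qed.

Lemma dw_edge_petal k t b : k < m -> t <= n - 2 ->
  dw_edge m n (petal n k t) b = (b == next n (petal n k t)).
Proof.
move=> hk ht; rewrite /dw_edge next_petal //; apply/idP/idP.
- case/or3P.
  + case/hasP_iota => k' _ /andP[/eqP E _].
    by move: E; rewrite /petal; set p := k * _; lia.
  + case/hasP_iota => k' _ /hasP_iota[i hi /andP[/eqP E /eqP ->]].
    have /petal_pos_inj Et : k * (n - 1) + t = (k' - 1) * (n - 1) + (i - 2).
      by move: E; rewrite /petal; set p := _ * _; set q := _ * _; lia.
    by rewrite ifN -?petalS //; lia.
  + case/hasP_iota => k' _ /andP[/eqP E /eqP ->].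
    have /petal_pos_inj Et : k * (n - 1) + t = (k' - 1) * (n - 1) + (n - 2).
      by move: E; rewrite /petal; set p := _ * _; set q := _ * _; lia.
    by rewrite ifT //; apply/eqP; lia.
- case: ifP => /eqP Ht /eqP ->; apply/or3P.
  + apply: Or33; apply/hasP_iota; exists k.+1; first lia.
    by rewrite /petal subSS subn0 /= eqxx andbT; apply/eqP; set p := _ * _; lia.
  + apply: Or32; apply/hasP_iota; exists k.+1; first lia.
    apply/hasP_iota; exists (t + 2); first lia.
    by rewrite /petal subSS subn0 /=; apply/andP; split; apply/eqP; set p := _ * _; lia.
Qed.

Lemma dw_edgeE v b : in_V m n v -> dw_edge m n v b = (b \in out_nbrs m n v).
Proof.
move=> hv; have [->|v_neq1] := eqVneq v 1; first exact: dw_edge_center.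
have [k [t [hk ht ->]]] := petalP hv v_neq1.
by rewrite dw_edge_petal // /out_nbrs petal_neq1 mem_seq1.
Qed.

Lemma out_nbrs_in_V v s : in_V m n v -> s \in out_nbrs m n v -> in_V m n s.
Proof.
move=> hv; have [->|v_neq1] := eqVneq v 1.
  by rewrite /out_nbrs eqxx => /mapP[k]; rewrite mem_iota => hk ->; apply: in_V_petal; lia.
have [k [t [hk ht ->]]] := petalP hv v_neq1.
rewrite /out_nbrs petal_neq1 mem_seq1 next_petal // => /eqP ->.
case: ifP => [_ | /negbT Ht]; first by rewrite /in_V /nverts /= leq_addl.
by apply: in_V_petal => //; lia.
Qed.

Lemma path_in_V v w : in_V m n v -> path (dw_edge m n) v w -> all (in_V m n) w.
Proof.
elim: w v => [//|s w IH] v hv /= /andP[e p].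
have hs : in_V m n s by apply: (out_nbrs_in_V hv); rewrite -dw_edgeE.
by rewrite hs (IH s).
Qed.

Lemma mem_walk_tails L v w : in_V m n v ->
  (w \in walk_tails m n L v) = (size w == L) && path (dw_edge m n) v w.
Proof.
elim: L v w => [|L IH] v w hv /=; first by rewrite mem_seq1; case: w.
apply/allpairsPdep/idP => [[s [w' [hs hw' ->]]] | ].
  by rewrite IH ?(out_nbrs_in_V hv) // in hw'; rewrite /= dw_edgeE // hs.
case: w => [//|s w'] /= /andP[hsz /andP[e p]].
rewrite dw_edgeE // in e; exists s, w'; split => //.
by rewrite IH ?(out_nbrs_in_V hv) // -eqSS hsz p.
Qed.

Lemma uniq_walk_tails L v : uniq (walk_tails m n L v).
Proof.
have uniq_out u : uniq (out_nbrs m n u).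
  rewrite /out_nbrs; case: ifP => // _.
  by rewrite map_inj_uniq ?iota_uniq // => x y /petal_cycle_inj.
elim: L v => [//|L IH] v /=.
apply: allpairs_uniq_dep => //.
by move=> [x1 y1] [x2 y2] _ _ /= [-> ->].
Qed.

Lemma nwalksS L v j :
  nwalks m n L.+1 v j = sumn [seq nwalks m n L s j | s <- out_nbrs m n v].
Proof.
rewrite /nwalks /= /allpairs_dep count_flatten -map_comp; congr sumn.
by apply: eq_map => s /=; rewrite count_map.
Qed.

Lemma nwalks_petalS L k t j : t <= n - 2 ->
  nwalks m n L.+1 (petal n k t) j = nwalks m n L (next n (petal n k t)) j.
Proof. by move=> ht; rewrite nwalksS /out_nbrs petal_neq1 /= addn0. Qed.

Lemma nwalks_petal_to_center L k t j : t <= n - 2 ->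
  nwalks m n ((n - 1 - t) + L) (petal n k t) j = nwalks m n L 1 j.
Proof.
move=> ht; have [s Es] : exists s, n - 1 - t = s.+1 by exists (n - 2 - t); lia.
rewrite Es; elim: s t ht Es => [|s IH] t ht Es.
  by rewrite add1n nwalks_petalS // next_petal // ifT //; lia.
by rewrite addSn nwalks_petalS // next_petal // ifN ?IH //; lia.
Qed.

Lemma nwalks_within_petal L k t j : t + L <= n - 2 ->
  nwalks m n L (petal n k t) j = (petal n k (t + L) == j).
Proof.
elim: L t => [|L IH] t h; first by rewrite /nwalks /= !addn0.
by rewrite nwalks_petalS ?next_petal ?ifN ?IH ?addSnnS //; lia.
Qed.

Lemma nwalks_center_cycle L j : nwalks m n (n + L) 1 j = m * nwalks m n L 1 j.
Proof.
have -> : n + L = ((n - 1 - 0) + L).+1 by lia.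
rewrite nwalksS /out_nbrs eqxx -map_comp.
rewrite (eq_map (g := fun _ => nwalks m n L 1 j)) => [|k /=].
  by rewrite sumn_map_const size_iota.
exact: nwalks_petal_to_center.
Qed.

Lemma nwalks_center_le1 L j : L <= n - 1 -> nwalks m n L 1 j <= 1.
Proof.
case: L => [|L] hL; first by rewrite /nwalks /=; case: (1 == j).
rewrite nwalksS /out_nbrs eqxx -map_comp.
rewrite (eq_map (g := fun k => nat_of_bool (petal n k L == j))) => [|k /=]; last first.
  by rewrite nwalks_within_petal //; lia.
rewrite sumn_count; apply: count_uniq_le1 (iota_uniq _ _) _ => x y /eqP <-.
by move/eqP/petal_cycle_inj.
Qed.

Lemma nwalks_reach_center i : in_V m n i ->
  exists s t, s + t = n - 1 /\ forall L j, nwalks m n (s + L) i j = nwalks m n L 1 j.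
Proof.
move=> hi; have [->|i_neq1] := eqVneq i 1; first by exists 0, (n - 1).
have [k [t [hk ht ->]]] := petalP hi i_neq1.
by exists (n - 1 - t), t; split => [|L j]; [lia | exact: nwalks_petal_to_center].
Qed.

Lemma nwalks_2n_1 i j : in_V m n i ->
  nwalks m n (2 * n - 1) i j = m * nwalks m n (n - 1) i j /\
  nwalks m n (n - 1) i j <= 1.
Proof.
move=> /nwalks_reach_center[s [t [Est to_center]]].
have -> : 2 * n - 1 = s + (n + t) by lia.
rewrite -Est !to_center nwalks_center_cycle nwalks_center_le1 //; lia.
Qed.

Lemma is_walk_cons L i j x w : in_V m n i ->
  is_walk m n L i j (x :: w) = [&& x == i, w \in walk_tails m n L i & last i w == j].
Proof.
move=> hi; rewrite /is_walk /= eqSS.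
have [->|_] := eqVneq x i; last by rewrite !(andFb, andbF).
rewrite mem_walk_tails // hi /=.
case p: (path _ _ _); last by rewrite !andbF.
by rewrite (path_in_V hi p) !andbT.
Qed.

Definition walk_seqs L i j : seq (seq nat) :=
  [seq i :: w | w <- walk_tails m n L i & last i w == j].

Lemma mem_walk_seqs L i j w : in_V m n i -> (w \in walk_seqs L i j) = is_walk m n L i j w.
Proof.
move=> hi; case: w => [|x w].
  by apply/mapP => -[].
rewrite is_walk_cons //; apply/mapP/idP => [[w' hw' [-> ->]] | /and3P[/eqP -> hw hl]].
  by move: hw'; rewrite mem_filter eqxx andbC.
by exists w; rewrite ?mem_filter ?hl.
Qed.

Lemma size_walk_seqs L i j : size (walk_seqs L i j) = nwalks m n L i j.
Proof. by rewrite size_map size_filter. Qed.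

Lemma exists_walkP L i j : in_V m n i ->
  (exists w, is_walk m n L i j w) <-> 0 < nwalks m n L i j.
Proof.
move=> hi; rewrite -size_walk_seqs; split => [[w] | ].
  by rewrite -mem_walk_seqs //; case: (walk_seqs _ _ _).
by case E: (walk_seqs L i j) => [//|w s] _; exists w; rewrite -mem_walk_seqs // E mem_head.
Qed.

Lemma vlab_tuple L (w : seq nat) : size w = L.+1 -> all (in_V m n) w ->
  exists t : L.+1.-tuple (vert m n), map (@vlab m n) t = w.
Proof.
move=> w_size w_in_V.
have x0 : vert m n by exists 0; rewrite /nverts addn1.
pose f v : vert m n := insubd x0 v.-1.
have fK : map (@vlab m n) (map f w) = w.
  rewrite -map_comp; apply: map_id_in => v /(allP w_in_V) /andP[v_ge1 v_le] /=.
  by rewrite /vlab val_insubd ifT ?prednK //; rewrite /nverts in v_le *; lia.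
have fw_size : size (map f w) == L.+1 by rewrite size_map w_size.
by exists (Tuple fw_size).
Qed.

Lemma card_walks L i j : in_V m n i -> #|walks m n L i j| = nwalks m n L i j.
Proof.
move=> hi; pose h (t : L.+1.-tuple (vert m n)) := map (@vlab m n) t.
have vlab_inj : injective (@vlab m n) by move=> x y [] /val_inj.
have h_inj : injective h by move=> t1 t2 /(inj_map vlab_inj) /val_inj.
rewrite cardE -(size_map h) -size_walk_seqs.
apply: perm_size; apply: uniq_perm.
- by rewrite (map_inj_uniq h_inj) enum_uniq.
- by rewrite map_inj_uniq ?filter_uniq ?uniq_walk_tails // => a b [].
move=> w; rewrite [RHS]mem_walk_seqs //; apply/mapP/idP => [[t] | w_walk].
  by rewrite mem_enum inE => t_walk ->.
have /andP[/eqP w_size /andP[w_in_V _]] := w_walk.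
have [t tw] := vlab_tuple w_size w_in_V.
by exists t; rewrite // mem_enum inE /h tw.
Qed.

End Windmill.

Unset Implicit Arguments.

Theorem lemma2p4 (m n i j : nat) :
  1 <= m -> 3 <= n -> in_V m n i -> in_V m n j ->
  ((exists w : seq nat, is_walk m n (2 * n - 1) i j w) <->
   (exists w : seq nat, is_walk m n (n - 1) i j w)) /\
  ((exists w : seq nat, is_walk m n (n - 1) i j w) ->
   #|walks m n (2 * n - 1) i j| = m).
Proof.
move=> hm hn hi _.
have [E2n E_le1] := nwalks_2n_1 hn j hi.
rewrite !exists_walkP // E2n muln_gt0 hm; split => // walk_n.
by rewrite card_walks // E2n (_ : nwalks m n (n - 1) i j = 1) ?muln1 //; lia.
Qed.
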